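(* Let $\mathcal M\subseteq\mathcal O_{\mathbb C^2,0}^2$ (coordinates $x,y$) be the submodule generated by the columns of $\begin{bmatrix}x&0&y\\ y&x&0\end{bmatrix}$, and let $h=(x,3y)$. Then $h\in(\mathcal M_{S_3})_0$ but $h\notin(\mathcal M_{S_1})_0$. In particular, $\mathcal M_{S_3}\not\subseteq\mathcal M_{S_1}$ in general.
   Context: $\mathcal M$ has generic rank $2$. $\pi_1,\pi_2:\mathbb C^2\times\mathbb C^2\to\mathbb C^2$ are the projections. For $g\in\mathcal O^q$, $g_D=(g\circ\pi_1,g\circ\pi_2)$; for a submodule or ideal $N$, $N_D$ is generated by $\{g_D:g\in N\}$. $\overline{\cdot}$ denotes integral closure. For an ideal $I\subseteq\mathcal O_{\mathbb C^2,0}$, its Lipschitz saturation is $I_S=\{f:f_D\in\overline{I_D}\text{ at }(0,0)\}$. $J_k(N)$ is the ideal of $k\times k$ minors of a matrix of generators of $N$, $(h,\mathcal M)$ the module generated by $h$ and $\mathcal M$. Definitions: $(\mathcal M_{S_1})_0=\{h:h_D\in\overline{\mathcal M_D}\text{ at }(0,0)\}$; $(\mathcal M_{S_3})_0=\{h:J_2((h,\mathcal M))\subseteq(J_2(\mathcal M))_S\text{ at }0\}$. *)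

(* Germs are represented by everywhere-defined functions,
   equalities of germs are "equal on a polydisc around the base point". *)
From HB Require Import structures.
From mathcomp Require Import all_boot all_order all_algebra.
From mathcomp Require Import complex.
From mathcomp Require Import reals.
Set Implicit Arguments. Unset Strict Implicit. Unset Printing Implicit Defensive.
Import Order.TTheory GRing.Theory Num.Theory.
Local Open Scope ring_scope.
Local Open Scope complex_scope.

Section Germs.
Variable R : realType.
Local Notation C := (R[i]).

Definition pt (n : nat) := 'I_n -> C.

Definition near_pt n (p : pt n) (e : C) (z : pt n) := forall i, `|z i - p i| < e.

Definition cdiff (g : C -> C) (t0 : C) :=
  exists l : C, forall eps : C, 0 < eps -> exists d : C, 0 < d /\
    forall t : C, 0 < `|t| < d -> `|(g (t0 + t) - g t0) / t - l| < eps.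

Definition cont_at n (f : pt n -> C) (z : pt n) :=
  forall eps : C, 0 < eps -> exists d : C, 0 < d /\
    forall w, near_pt z d w -> `|f w - f z| < eps.

Definition shift n (z : pt n) (i : 'I_n) (t : C) : pt n :=
  fun j => if j == i then z j + t else z j.

(* f is holomorphic on a neighbourhood of p: continuous and holomorphic in
   each variable separately (standard definition of holomorphy in C^n) *)
Definition holo_at n (p : pt n) (f : pt n -> C) :=
  exists e : C, 0 < e /\ forall z, near_pt p e z ->
    cont_at f z /\ forall i, cdiff (fun t => f (shift z i t)) 0.

Definition vholo_at n q (p : pt n) (h : pt n -> 'I_q -> C) :=
  forall k, holo_at p (fun z => h z k).

(* h is, as a germ at p, in the O_{C^n,p}-submodule of O^q_{C^n,p}
   generated by the (possibly infinite) set S *)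
Definition in_span n q (p : pt n) (S : (pt n -> 'I_q -> C) -> Prop)
    (h : pt n -> 'I_q -> C) :=
  exists (m : nat) (g : 'I_m -> pt n -> 'I_q -> C) (a : 'I_m -> pt n -> C),
    (forall j, S (g j)) /\ (forall j, holo_at p (a j)) /\
    exists e : C, 0 < e /\ forall z, near_pt p e z ->
      forall k, h z k = \sum_(j < m) a j z * g j z k.

Definition span_set n q (p : pt n) (S : (pt n -> 'I_q -> C) -> Prop) :=
  fun h => vholo_at p h /\ in_span p S h.

Definition pt0 (n : nat) : pt n := fun _ => 0.
Arguments pt0 : clear implicits.

(* integral closure at p of the submodule generated by S (curve criterion,
   Gaffney's definition): for every analytic curve phi : (C,0) -> (C^n,p),
   h o phi lies in phi^*(M) O_1. *)
Definition in_int_closure n q (p : pt n) (S : (pt n -> 'I_q -> C) -> Prop)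
    (h : pt n -> 'I_q -> C) :=
  vholo_at p h /\
  forall phi : pt 1 -> pt n, vholo_at (pt0 1) phi -> phi (pt0 1) = p ->
    in_span (pt0 1) (fun G => exists g, S g /\ G = (fun t => g (phi t)))
            (fun t => h (phi t)).

Definition pi1 n (z : pt (n + n)) : pt n := fun i => z (lshift n i).
Definition pi2 n (z : pt (n + n)) : pt n := fun i => z (rshift n i).

Definition dbl n q (g : pt n -> 'I_q -> C) : pt (n + n) -> 'I_(q + q) -> C :=
  fun z k => match split k with
             | inl i => g (pi1 z) i
             | inr i => g (pi2 z) i
             end.

Definition double_set n q (N : (pt n -> 'I_q -> C) -> Prop) :=
  fun G => exists g, N g /\ G = dbl g.

Definition vec1 n (f : pt n -> C) : pt n -> 'I_1 -> C := fun z _ => f z.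

Definition ideal_set n (p : pt n) (S : (pt n -> C) -> Prop) :=
  fun f => holo_at p f /\
    in_span p (fun G => exists g, S g /\ G = vec1 g) (vec1 f).

(* Lipschitz saturation of an ideal I (a set of germs at p):
   I_S = {f : f_D in closure(I_D) at (p,p)} *)
Definition pp n (p : pt n) : pt (n + n) :=
  fun k => match split k with inl i => p i | inr i => p i end.

Definition lip_sat n (p : pt n) (I : (pt n -> C) -> Prop) :=
  fun f => holo_at p f /\
    in_int_closure (pp p) (double_set (fun G => exists g, I g /\ G = vec1 g))
                   (dbl (vec1 f)).

Definition det2 n (u v : pt n -> 'I_2 -> C) : pt n -> C :=
  fun z => u z ord0 * v z ord_max - u z ord_max * v z ord0.

Definition J2_gens n m (cols : 'I_m -> pt n -> 'I_2 -> C) :=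
  fun f => exists i j : 'I_m, (i < j)%N /\ f = det2 (cols i) (cols j).

(* (M_{S_1})_p : h_D in closure(M_D) at (p,p), M generated by cols *)
Definition in_MS1 n m (p : pt n) (cols : 'I_m -> pt n -> 'I_2 -> C)
    (h : pt n -> 'I_2 -> C) :=
  in_int_closure (pp p)
    (double_set (span_set p (fun g => exists j, g = cols j))) (dbl h).

(* (M_{S_3})_p : J_2((h,M)) subset (J_2(M))_S at p *)
Definition add_col n m (h : pt n -> 'I_2 -> C) (cols : 'I_m -> pt n -> 'I_2 -> C)
    : 'I_m.+1 -> pt n -> 'I_2 -> C :=
  fun j => match unlift ord0 j with None => h | Some j' => cols j' end.

Definition in_MS3 n m (p : pt n) (cols : 'I_m -> pt n -> 'I_2 -> C)
    (h : pt n -> 'I_2 -> C) :=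
  vholo_at p h /\
  forall f, ideal_set p (J2_gens (add_col h cols)) f ->
            lip_sat p (ideal_set p (J2_gens cols)) f.

Definition xc (z : pt 2) : C := z ord0.
Definition yc (z : pt 2) : C := z ord_max.

Definition col2 (a b : pt 2 -> C) : pt 2 -> 'I_2 -> C :=
  fun z k => if k == ord0 then a z else b z.

Definition Mcols : 'I_3 -> pt 2 -> 'I_2 -> C :=
  fun j => if j == 0%N :> nat then col2 xc yc
           else if j == 1%N :> nat then col2 (fun _ => 0) xc
           else col2 yc (fun _ => 0).

Definition hex : pt 2 -> 'I_2 -> C := col2 xc (fun z => 3%:R * yc z).

End Germs.

From mathcomp Require Import all_boot all_order all_algebra complex reals.
From mathcomp Require Import ring.
From Stdlib Require Import FunctionalExtensionality.

(* M_{S_3}: the 2x2 minors of (h, M) are constant multiples of minors of M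
   (det(h,c1) = 2 det(c2,c3), det(h,c2) = det(c1,c2), det(h,c3) = 3 det(c1,c3)),
   so J_2((h,M)) is contained in J_2(M), which lies in its Lipschitz saturation.

   not M_{S_1}: we use the curve criterion for integral closure with the test
   curve t |-> ((t,0),(t,t)) in C^2 x C^2 and the linear functional
   F(w) = w_{2,y} - w_{1,x} - w_{1,y}.  Every column c satisfies
   c_y(t,t) = c_x(t,0) + c_y(t,0), hence for g = sum a_i c_i in M we get
   F(g_D(curve)) = sum (a_i(t,t) - a_i(t,0)) c_{i,y}(t,t) = o(|t|) by continuity
   of the a_i.  This little-o property passes to the module generated along the
   curve, whereas F(h_D(curve)) = 3t - t = 2t is not o(|t|). *)

Set Implicit Arguments. Unset Strict Implicit. Unset Printing Implicit Defensive.
Import Order.TTheory GRing.Theory Num.Theory.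
Local Open Scope ring_scope.
Local Open Scope complex_scope.

Section NearZero.
Variable R : realType.
Local Notation C := (R[i]).

Definition near0 (P : C -> Prop) := exists d : C, 0 < d /\ forall t : C, `|t| < d -> P t.

Lemma near0_mono (P Q : C -> Prop) : (forall t, P t -> Q t) -> near0 P -> near0 Q.
Proof. by move=> PQ [d [d_gt0 HP]]; exists d; split=> // t /HP /PQ. Qed.

Lemma near0_and (P Q : C -> Prop) : near0 P -> near0 Q -> near0 (fun t => P t /\ Q t).
Proof.
move=> [d1 [d1_gt0 H1]] [d2 [d2_gt0 H2]].
have [le_d12 | le_d21] := orP (real_leVge (gtr0_real d1_gt0) (gtr0_real d2_gt0)).
- exists d1; split=> // t lt_t; split; [exact: H1 | apply: H2; exact: lt_le_trans le_d12].
- exists d2; split=> // t lt_t; split; [apply: H1; exact: lt_le_trans le_d21 | exact: H2].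
Qed.

Lemma near0_all (T : finType) (P : T -> C -> Prop) :
  (forall i, near0 (P i)) -> near0 (fun t => forall i, P i t).
Proof.
move=> HP; suff: near0 (fun t => forall i, i \in enum T -> P i t).
  by apply: near0_mono => t Pt i; apply: Pt; rewrite mem_enum.
elim: (enum T) => [|i s IHs]; first by exists 1; split=> // t _ i.
apply: near0_mono (near0_and (HP i) IHs) => t [Pit Pst] j.
by rewrite inE => /orP[/eqP-> // | /Pst].
Qed.

Lemma near0_witness (P : C -> Prop) : near0 P -> exists t : C, t != 0 /\ P t.
Proof.
move=> [d [d_gt0 HP]]; exists (d / 2%:R); split.
  by rewrite mulf_neq0 ?invr_eq0 ?pnatr_eq0 // gt_eqF.
apply: HP; rewrite normrM normfV (gtr0_norm d_gt0) normr_nat.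
by rewrite ltr_pdivrMr ?ltr0n // ltr_pMr // ltr1n.
Qed.

End NearZero.

Section LittleO.
Variable R : realType.
Local Notation C := (R[i]).

Definition littleo (rho f : C -> C) :=
  forall eps : C, 0 < eps -> near0 (fun t => `|f t| <= eps * rho t).

Lemma littleo_eq (rho f g : C -> C) :
  near0 (fun t => f t = g t) -> littleo rho g -> littleo rho f.
Proof. by move=> Efg Hg eps /Hg Hgt; apply: near0_mono (near0_and Efg Hgt) => t [->]. Qed.

Lemma littleo_sum (rho : C -> C) m (f : 'I_m -> C -> C) : (forall t, 0 <= rho t) ->
  (forall i, littleo rho (f i)) -> littleo rho (fun t => \sum_(i < m) f i t).
Proof.
move=> rho_ge0 Hf eps eps_gt0.
have eps'_gt0 : 0 < eps / m.+1%:R by rewrite divr_gt0 ?ltr0n.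
apply: near0_mono (near0_all (fun i => Hf i _ eps'_gt0)) => t Hft.
apply: le_trans (ler_norm_sum _ _ _) _.
apply: le_trans (ler_sum _ (fun i _ => Hft i)) _.
rewrite sumr_const card_ord.
have -> : eps * rho t = (eps / m.+1%:R * rho t) *+ m.+1.
  by rewrite -mulr_natr mulrAC divfK // pnatr_eq0.
by apply: ler_wpMn2l => //; rewrite mulr_ge0 // ltW.
Qed.

Lemma littleo_Mbounded (rho f g : C -> C) (K : C) : (forall t, 0 <= rho t) -> 0 <= K ->
  near0 (fun t => `|g t| <= K) -> littleo rho f -> littleo rho (fun t => g t * f t).
Proof.
move=> rho_ge0 K_ge0 Hg Hf eps eps_gt0.
have K1_gt0 : 0 < K + 1 by rewrite ltr_wpDl.
apply: near0_mono (near0_and Hg (Hf _ (divr_gt0 eps_gt0 K1_gt0))) => t [le_g le_f].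
rewrite normrM; apply: le_trans (ler_pM _ _ le_g le_f) _ => //.
rewrite mulrA ler_wpM2r // mulrCA -[leRHS]mulr1 ler_wpM2l ?ltW //.
by rewrite ltr_pdivrMr // mul1r ltrDl.
Qed.

Lemma littleo_Mdominated (rho f g : C -> C) :
  littleo (fun=> 1) f -> near0 (fun t => `|g t| <= rho t) -> littleo rho (fun t => f t * g t).
Proof.
move=> Hf Hg eps /Hf Hft; apply: near0_mono (near0_and Hft Hg) => t [le_f le_g].
by rewrite mulr1 in le_f; rewrite normrM; exact: ler_pM.
Qed.

End LittleO.

Section Holomorphic.
Variable R : realType.
Local Notation C := (R[i]).

Lemma norm_scale_lt (c u eps : C) : 0 < eps -> `|u| < eps / (`|c| + 1) -> `|c * u| < eps.
Proof.
move=> eps_gt0; have c1_gt0 : 0 < `|c| + 1 by rewrite ltr_wpDl.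
rewrite ltr_pdivlMr // normrM => lt_u; apply: le_lt_trans lt_u.
by rewrite mulrC ler_wpM2l // lerDl.
Qed.

Lemma cdiff_ext (g h : C -> C) : (forall t, g t = h t) -> cdiff h 0 -> cdiff g 0.
Proof.
move=> Egh [l Hl]; exists l => eps /Hl [d [d_gt0 Hd]].
by exists d; split=> // t; rewrite !Egh; exact: Hd.
Qed.

Lemma cdiff_cst (c : C) : cdiff (fun=> c) 0.
Proof. by exists 0 => eps eps_gt0; exists 1; split=> // t _; rewrite subrr mul0r subr0 normr0. Qed.

Lemma cdiff_translate (a : C) : cdiff (fun t => a + t) 0.
Proof.
exists 1 => eps eps_gt0; exists 1; split=> // t /andP[t_gt0 _].
have -> : a + (0 + t) - (a + 0) = t by ring.
by rewrite divff ?subrr ?normr0 // -normr_gt0.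
Qed.

Lemma cdiff_scale (c : C) (g : C -> C) : cdiff g 0 -> cdiff (fun t => c * g t) 0.
Proof.
move=> [l Hl]; exists (c * l) => eps eps_gt0.
have [d [d_gt0 Hd]] := Hl (eps / (`|c| + 1)) (divr_gt0 eps_gt0 (ltr_wpDl (normr_ge0 c) ltr01)).
exists d; split=> // t /Hd lt_t; rewrite -mulrBr -mulrA -mulrBr.
exact: norm_scale_lt lt_t.
Qed.

Lemma holo_cst n (p : pt R n) (c : C) : holo_at p (fun=> c).
Proof.
exists 1; split=> // z _; split=> [eps eps_gt0 | i]; last exact: cdiff_cst.
by exists 1; split=> // w _; rewrite subrr normr0.
Qed.

Lemma holo_coord n (p : pt R n) (i : 'I_n) : holo_at p (fun z => z i).
Proof.
exists 1; split=> // z _; split=> [eps eps_gt0 | j].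
  by exists eps; split=> // w /(_ i).
by rewrite /shift; case: eqP => _; [exact: cdiff_translate | exact: cdiff_cst].
Qed.

Lemma holo_scale n (p : pt R n) (c : C) (f : pt R n -> C) :
  holo_at p f -> holo_at p (fun z => c * f z).
Proof.
move=> [e [e_gt0 Hf]]; exists e; split=> // z /Hf [cont_f diff_f].
split=> [eps eps_gt0 | i]; last exact: cdiff_scale.
have [d [d_gt0 Hd]] := cont_f _ (divr_gt0 eps_gt0 (ltr_wpDl (normr_ge0 c) ltr01)).
by exists d; split=> // w /Hd; rewrite -mulrBr; exact: norm_scale_lt.
Qed.

Lemma holo_cont n (p : pt R n) (f : pt R n -> C) : holo_at p f -> cont_at f p.
Proof. by move=> [e [e_gt0 Hf]]; apply: (proj1 (Hf p _)) => i; rewrite subrr normr0. Qed.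

(* Restriction of a point of C^N to the coordinates selected by s : 'I_n -> 'I_N;
   the projections pi1, pi2 of C^n x C^n are restrictions. *)
Definition restr n N (s : 'I_n -> 'I_N) (z : pt R N) : pt R n := fun i => z (s i).

Lemma restr_shift_in n N (s : 'I_n -> 'I_N) (z : pt R N) i t :
  injective s -> restr s (shift z (s i) t) = shift (restr s z) i t.
Proof.
move=> s_inj; apply: functional_extensionality => k.
by rewrite /restr /shift (inj_eq s_inj).
Qed.

Lemma restr_shift_out n N (s : 'I_n -> 'I_N) (z : pt R N) j t :
  (forall i, s i != j) -> restr s (shift z j t) = restr s z.
Proof.
move=> s_j; apply: functional_extensionality => k.
by rewrite /restr /shift (negbTE (s_j k)).
Qed.

Lemma holo_restr n N (s : 'I_n -> 'I_N) (p : pt R n) (q : pt R N) (f : pt R n -> C) :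
  injective s -> (forall i, q (s i) = p i) ->
  holo_at p f -> holo_at q (fun z => f (restr s z)).
Proof.
move=> s_inj qs [e [e_gt0 Hf]]; exists e; split=> // z z_near.
have [cont_f diff_f] : cont_at f (restr s z) /\ forall i, cdiff (fun t => f (shift (restr s z) i t)) 0.
  by apply: Hf => i; rewrite -qs; exact: z_near.
split=> [eps /cont_f [d [d_gt0 Hd]] | j].
  by exists d; split=> // w w_near; apply: Hd => i; exact: w_near.
case: (pickP (fun i => s i == j)) => [i /eqP <- | s_j].
  by apply: cdiff_ext (diff_f i) => t; rewrite restr_shift_in.
by apply: cdiff_ext (cdiff_cst _) => t; rewrite restr_shift_out // => i; rewrite s_j.
Qed.

Lemma vholo_dbl n q (p : pt R n) (g : pt R n -> 'I_q -> C) :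
  vholo_at p g -> vholo_at (pp p) (dbl g).
Proof.
move=> Hg k; rewrite /dbl -(splitK k); case: (split k) => j /=.
- rewrite (unsplitK (inl j)); apply: (@holo_restr _ _ (@lshift n n)) (Hg j) => //.
    exact: lshift_inj.
  by move=> i; rewrite /pp (unsplitK (inl i)).
- rewrite (unsplitK (inr j)); apply: (@holo_restr _ _ (@rshift n n)) (Hg j) => //.
    exact: rshift_inj.
  by move=> i; rewrite /pp (unsplitK (inr i)).
Qed.

Definition through n (p : pt R n) (u : C -> pt R n) := forall t k, `|u t k - p k| <= `|t|.

Lemma through_near n (p : pt R n) (u : C -> pt R n) (d : C) t :
  through p u -> `|t| < d -> near_pt p d (u t).
Proof. by move=> thr_u lt_t k; exact: le_lt_trans (thr_u t k) lt_t. Qed.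

Lemma cont_bounded n (p : pt R n) (a : pt R n -> C) (u : C -> pt R n) :
  cont_at a p -> through p u -> exists K : C, 0 <= K /\ near0 (fun t => `|a (u t)| <= K).
Proof.
move=> /(_ 1 ltr01) [d [d_gt0 Hd]] thr_u.
exists (`|a p| + 1); split; first by rewrite addr_ge0.
exists d; split=> // t /(through_near thr_u) /Hd lt_a.
rewrite -[a (u t)](subrK (a p)) [_ + a p]addrC.
by apply: le_trans (ler_normD _ _) _; rewrite lerD2l ltW.
Qed.

Lemma cont_increment n (p : pt R n) (a : pt R n -> C) (u v : C -> pt R n) :
  cont_at a p -> through p u -> through p v ->
  littleo (fun=> 1) (fun t => a (v t) - a (u t)).
Proof.
move=> cont_a thr_u thr_v eps eps_gt0.
have [d [d_gt0 Hd]] := cont_a _ (divr_gt0 eps_gt0 (ltr0n _ 2)).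
exists d; split=> // t lt_t; rewrite mulr1 (splitr eps).
have -> : a (v t) - a (u t) = (a (v t) - a p) - (a (u t) - a p).
  by rewrite opprB addrA subrK.
apply: le_trans (ler_normB _ _) _.
by apply: lerD; apply/ltW/Hd; exact: through_near lt_t.
Qed.

End Holomorphic.

Section Ideals.
Variable R : realType.
Local Notation C := (R[i]).

Lemma ideal_set_scaled n (p : pt R n) (S T : (pt R n -> C) -> Prop) f :
  (forall g, S g -> exists (c : C) g', T g' /\ forall z, g z = c * g' z) ->
  ideal_set p S f -> ideal_set p T f.
Proof.
move=> ST [holo_f [m [G [a [SG [holo_a [e [e_gt0 Ef]]]]]]]].
have /fin_all_exists [cg Hcg] : forall j, exists cg : C * (pt R n -> C),
    T cg.2 /\ forall z k, G j z k = cg.1 * cg.2 z.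
  move=> j; have [g [Sg ->]] := SG j.
  by have [c [g' [Tg' Eg]]] := ST g Sg; exists (c, g'); split=> // z k; rewrite /vec1 Eg.
split=> //; exists m, (fun j => vec1 (cg j).2), (fun j z => (cg j).1 * a j z).
split; [|split].
- by move=> j; exists (cg j).2; split=> //; exact: (Hcg j).1.
- by move=> j; exact: holo_scale.
- exists e; split=> // z z_near k; rewrite Ef //; apply: eq_bigr => j _.
  by rewrite (Hcg j).2 mulrA [a j z * _]mulrC.
Qed.

(* Every ideal is contained in its Lipschitz saturation: f_D is itself a
   generator of I_D. *)
Lemma lip_sat_sub n (p : pt R n) (I : (pt R n -> C) -> Prop) f :
  holo_at p f -> I f -> lip_sat p I f.
Proof.
move=> holo_f If; split=> //; split; first by apply: vholo_dbl => k.
move=> phi _ _; exists 1%N, (fun _ t => dbl (vec1 f) (phi t)), (fun _ _ => 1).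
split; [|split].
- by move=> _; exists (dbl (vec1 f)); split=> //; exists (vec1 f); split=> //; exists f.
- by move=> _; exact: holo_cst.
- by exists 1; split=> // z _ k; rewrite big_ord1 mul1r.
Qed.

End Ideals.

Section FirstPart.
Variable R : realType.
Local Notation C := (R[i]).
Local Notation M := (Mcols (R:=R)).
Local Notation h := (hex (R:=R)).

Lemma add_col_ord0 n m (g : pt R n -> 'I_2 -> C) cols : @add_col R n m g cols ord0 = g.
Proof. by rewrite /add_col unlift_none. Qed.

Lemma add_col_lift n m (g : pt R n -> 'I_2 -> C) cols j :
  @add_col R n m g cols (lift ord0 j) = cols j.
Proof. by rewrite /add_col liftK. Qed.

Lemma J2_gens_Mcols (i j : nat) (lt_ij : (i < j)%N) (lt_j3 : (j < 3)%N) :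
  J2_gens M (det2 (M (Ordinal (ltn_trans lt_ij lt_j3))) (M (Ordinal lt_j3))).
Proof. by exists (Ordinal (ltn_trans lt_ij lt_j3)), (Ordinal lt_j3). Qed.

(* The minors of (h, M) are det(h, c1) = 2 det(c2, c3), det(h, c2) = det(c1, c2),
   det(h, c3) = 3 det(c1, c3), together with the minors of M itself. *)
Lemma hex_minors_scaled g : J2_gens (add_col h M) g ->
  exists (c : C) g', J2_gens M g' /\ forall z, g z = c * g' z.
Proof.
move=> [i [j [lt_ij ->]]].
case: (unliftP ord0 j) lt_ij => [j'|] -> lt_ij; last by rewrite ltn0 in lt_ij.
rewrite add_col_lift; case: (unliftP ord0 i) lt_ij => [i'|] -> lt_ij.
  rewrite add_col_lift; exists 1, (det2 (M i') (M j')); split; last by move=> z; rewrite mul1r.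
  by exists i', j'; split=> //; rewrite /= /bump /= !add1n ltnS in lt_ij.
rewrite add_col_ord0; case: j' {lt_ij} => [[|[|[|//]]] lt_j3].
- exists 2%:R; eexists; split; first exact: (@J2_gens_Mcols 1 2).
  by move=> z; rewrite /det2 /Mcols /hex /col2 /=; ring.
- exists 1; eexists; split; first exact: (@J2_gens_Mcols 0 1).
  by move=> z; rewrite /det2 /Mcols /hex /col2 /=; ring.
- exists 3%:R; eexists; split; first exact: (@J2_gens_Mcols 0 2).
  by move=> z; rewrite /det2 /Mcols /hex /col2 /=; ring.
Qed.

Lemma vholo_hex : vholo_at (@pt0 R 2) h.
Proof.
move=> k; rewrite /hex /col2; case: (k == ord0); first exact: holo_coord.
exact: holo_scale (holo_coord _ _).
Qed.

(* h lies in M_{S_3}: J_2((h,M)) is even contained in J_2(M). *)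
Lemma hex_in_MS3 : in_MS3 (@pt0 R 2) M h.
Proof.
split=> [|f Jf]; first exact: vholo_hex.
exact: lip_sat_sub (proj1 Jf) (ideal_set_scaled hex_minors_scaled Jf).
Qed.

End FirstPart.

Section CurveTest.
Variable R : realType.
Local Notation C := (R[i]).

Definition lin q (c : 'I_q -> C) (v : 'I_q -> C) : C := \sum_(k < q) c k * v k.

Definition tp (t : C) : pt R 1 := fun=> t.

Lemma through_tp : through (@pt0 R 1) tp.
Proof. by move=> t k; rewrite /pt0 subr0. Qed.

Lemma span_littleo q (S : (pt R 1 -> 'I_q -> C) -> Prop) (c : 'I_q -> C) (rho : C -> C) g :
  (forall t, 0 <= rho t) -> (forall G, S G -> littleo rho (fun t => lin c (G (tp t)))) ->
  in_span (@pt0 R 1) S g -> littleo rho (fun t => lin c (g (tp t))).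
Proof.
move=> rho_ge0 small_S [m [G [a [SG [holo_a [e [e_gt0 Eg]]]]]]].
apply: (@littleo_eq _ _ _ (fun t => \sum_(j < m) a j (tp t) * lin c (G j (tp t)))).
  exists e; split=> // t /(through_near through_tp) t_near.
  rewrite /lin; under eq_bigr => k _ do rewrite (Eg _ t_near) big_distrr.
  rewrite exchange_big; apply: eq_bigr => j _.
  by rewrite big_distrr; apply: eq_bigr => k _; exact: mulrCA.
apply: littleo_sum => // j.
have [K [K_ge0 bnd_a]] := cont_bounded (holo_cont (holo_a j)) through_tp.
exact: littleo_Mbounded K_ge0 bnd_a (small_S _ (SG j)).
Qed.

End CurveTest.

Section SecondPart.
Variable R : realType.
Local Notation C := (R[i]).
Local Notation M := (Mcols (R:=R)).
Local Notation h := (hex (R:=R)).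

(* The test curve t |-> ((t, 0), (t, t)) in C^2 x C^2, through (0, 0). *)
Definition test_curve (t : pt R 1) : pt R (2 + 2) :=
  fun k => if k == lshift 2 ord_max then 0 else t ord0.

Lemma vholo_test_curve : vholo_at (@pt0 R 1) test_curve.
Proof. by move=> k; rewrite /test_curve; case: (_ == _); [exact: holo_cst | exact: holo_coord]. Qed.

Lemma test_curve0 : test_curve (@pt0 R 1) = pp (@pt0 R 2).
Proof.
by apply: functional_extensionality => k; rewrite /test_curve /pp /pt0; case: split; case: (_ == _).
Qed.

Definition test_coef (k : 'I_(2 + 2)) : C :=
  if k == rshift 2 ord_max then 1 else if k == rshift 2 ord0 then 0 else -1.

Lemma lin_test_coef (w : 'I_(2 + 2) -> C) :
  lin test_coef w = w (rshift 2 ord_max) - w (lshift 2 ord0) - w (lshift 2 ord_max).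
Proof.
rewrite /lin big_split_ord /= !big_ord_recr !big_ord0 /= /test_coef /=.
have -> : widen_ord (leqnSn 1) ord_max = ord0 :> 'I_2 by exact: val_inj.
by ring.
Qed.

Definition curve1 (t : C) : pt R 2 := pi1 (test_curve (tp t)).
Definition curve2 (t : C) : pt R 2 := pi2 (test_curve (tp t)).

Lemma curve1_x t : curve1 t ord0 = t.
Proof. by rewrite /curve1 /pi1 /test_curve eq_lshift. Qed.

Lemma curve1_y t : curve1 t ord_max = 0.
Proof. by rewrite /curve1 /pi1 /test_curve eq_lshift eqxx. Qed.

Lemma curve2_coord t k : curve2 t k = t.
Proof. by rewrite /curve2 /pi2 /test_curve eq_rlshift. Qed.

Lemma through_curve1 : through (@pt0 R 2) curve1.
Proof.
move=> t k; rewrite /pt0 subr0.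
have [->|->] : k = ord0 \/ k = ord_max.
  by case: k => [[|[|//]] lt_k2]; [left | right]; apply: val_inj.
- by rewrite curve1_x.
- by rewrite curve1_y normr0.
Qed.

Lemma through_curve2 : through (@pt0 R 2) curve2.
Proof. by move=> t k; rewrite /pt0 subr0 curve2_coord. Qed.

Lemma lin_dbl_test_curve (g : pt R 2 -> 'I_2 -> C) t :
  lin test_coef (dbl g (test_curve (tp t))) =
  g (curve2 t) ord_max - g (curve1 t) ord0 - g (curve1 t) ord_max.
Proof. by rewrite lin_test_coef /dbl (unsplitK (inr _)) !(unsplitK (inl _)). Qed.

(* Each column c of M satisfies c_y(t, t) = c_x(t, 0) + c_y(t, 0), so the test
   functional kills the doubled columns; moreover |c_y(t, t)| <= |t|. *)
Lemma Mcols_balanced (j : 'I_3) t :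
  M j (curve2 t) ord_max = M j (curve1 t) ord0 + M j (curve1 t) ord_max /\
  `|M j (curve2 t) ord_max| <= `|t|.
Proof.
case: j => [[|[|[|//]]] lt_j3];
  by rewrite /Mcols /col2 /xc /yc /= ?curve2_coord ?curve1_x ?curve1_y ?addr0 ?add0r ?normr0.
Qed.

(* For g = sum_i a_i c_i in M, the test functional on g_D along the test curve
   is sum_i (a_i(t, t) - a_i(t, 0)) c_{i,y}(t, t) = o(1) O(|t|). *)
Lemma span_M_littleo g : span_set (@pt0 R 2) (fun g => exists j, g = M j) g ->
  littleo (fun t => `|t|) (fun t => lin test_coef (dbl g (test_curve (tp t)))).
Proof.
move=> [_ [m [cs [a [Mcs [holo_a [e [e_gt0 Eg]]]]]]]].
pose incr i t := a i (curve2 t) - a i (curve1 t).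
apply: (@littleo_eq _ _ _ (fun t => \sum_(i < m) incr i t * cs i (curve2 t) ord_max)).
  exists e; split=> // t lt_t; rewrite lin_dbl_test_curve.
  have near1 := through_near through_curve1 lt_t.
  have near2 := through_near through_curve2 lt_t.
  rewrite (Eg _ near2) !(Eg _ near1).
  rewrite -!sumrB; apply: eq_bigr => i _; have [j ->] := Mcs i.
  by rewrite (Mcols_balanced j t).1 /incr; ring.
apply: (@littleo_sum _ _ _ (fun i t => incr i t * cs i (curve2 t) ord_max)) => // i.
apply: littleo_Mdominated.
  exact: cont_increment (holo_cont (holo_a i)) through_curve1 through_curve2.
by exists 1; split=> // t _; have [j ->] := Mcs i; exact: (Mcols_balanced j t).2.
Qed.

Lemma lin_dbl_hex t : lin test_coef (dbl h (test_curve (tp t))) = 2%:R * t.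
Proof.
rewrite lin_dbl_test_curve /hex /col2 /xc /yc /= curve2_coord curve1_x curve1_y.
by ring.
Qed.

Lemma hex_notin_MS1 : ~ in_MS1 (@pt0 R 2) M h.
Proof.
move=> [_ /(_ _ vholo_test_curve test_curve0) h_span].
have : littleo (fun t => `|t|) (fun t => lin test_coef (dbl h (test_curve (tp t)))).
  apply: span_littleo h_span => // G [_ [[g [Mg ->]] ->]]; exact: span_M_littleo.
move=> /(_ 1 ltr01) /near0_witness [t [t_neq0]].
rewrite lin_dbl_hex mul1r normrM normr_nat -subr_le0 -{2}(mul1r `|t|) -mulrBl.
have -> : 2%:R - 1 = 1 :> C by ring.
by rewrite mul1r normr_le0 (negbTE t_neq0).
Qed.

End SecondPart.

Theorem mainTheorem16 (R : realType) :
  in_MS3 (@pt0 R 2) (Mcols (R:=R)) (hex (R:=R)) /\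
  ~ in_MS1 (@pt0 R 2) (Mcols (R:=R)) (hex (R:=R)).
Proof. split; [exact: hex_in_MS3 | exact: hex_notin_MS1]. Qed.
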